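(* Let $|\nu|\le1$. For all $T>0$ and $\kappa>0$ there exist $\varepsilon_0>0$, $\gamma_0>0$ and $C>0$ such that \[ \|f\|^2_{L^2(H^\gamma)}=\int_0^T\int_{\mathbb{R}}|f(\tau,k)|^2(|k|^{2\gamma}+1)\,dk\,d\tau\le C\varepsilon^{1-\kappa} \] for all $\gamma\in(0,\gamma_0)$ and all $\varepsilon\in(0,\varepsilon_0)$.
   Context: Here $f=f^{(\varepsilon)}$ is the kernel $f(\tau,k)=e^{\tau\nu}\big[\chi_{(-1/\varepsilon,\infty)}(k)e^{-\tau(2+k\varepsilon)^2k^2}-e^{-4\tau k^2}\big]$ for $\tau\in[0,T]$, $k\in\mathbb{R}$ ($\chi_I$ the indicator of $I$); it is the Fourier symbol of the difference between the rescaled Swift–Hohenberg semigroup and the amplitude-equation semigroup $e^{\tau(4\partial_X^2+\nu)}$. *)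

From Stdlib Require Import Reals Lra ClassicalEpsilon.
Open Scope R_scope.

(* Total Riemann integral: the value of the Riemann integral of f on [a,b]
   when f is Riemann integrable there (unspecified otherwise; integrability
   is always asserted separately in the statement). *)
Definition RI (f : R -> R) (a b : R) : R :=
  epsilon (inhabits 0)
    (fun v => exists pr : Riemann_integrable f a b, RiemannInt pr = v).

Definition chi_eps (eps k : R) : R :=
  if Rlt_dec (- / eps) k then 1 else 0.

Definition fker (nu eps tau k : R) : R :=
  exp (tau * nu) *
  (chi_eps eps k * exp (- tau * ((2 + k * eps) ^ 2 * k ^ 2))
   - exp (- 4 * tau * k ^ 2)).

(* |k|^{p}, with the convention 0^p = 0 for p > 0 *)
Definition abspow (k p : R) : R :=
  if Req_EM_T k 0 then 0 else Rpower (Rabs k) p.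

Definition integrand (nu eps gam tau k : R) : R :=
  (Rabs (fker nu eps tau k)) ^ 2 * (abspow k (2 * gam) + 1).

From Stdlib Require Import Reals Lra Psatz ClassicalEpsilon FunctionalExtensionality.
From Coquelicot Require Import Coquelicot.
Open Scope R_scope.

(* For |k| eps >= 1 the kernel is bounded by e^T e^{-tau k^2}.  For |k| eps < 1 the
   indicator is 1 and the two Gaussian exponents differ by tau eps O(|k|^3), so
   |f|^2 <~ eps^2 tau^2 k^6 e^{-2 tau k^2}.  Trading a power (tau k^2)^{-bt}, bt < 1,
   of the Gaussian decay gives, with p = 2 bt - 2 gam,
     |f|^2 (|k|^{2 gam} + 1) <~ tau^{-bt} eps^p (1 + eps |k|)^{-p},
   whose k-integral is O(eps^{p-1}) as soon as p > 1 and whose tau-integral is finite.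
   Taking bt close to 1 and gam small makes p - 1 >= 1 - kappa.  On [-M, M] the time
   singularity is moved to (tau + d)^{-bt} with d ~ M^{-2}, at the cost of a factor e,
   so the bound does not depend on M. *)

Lemma exp_le x y : x <= y -> exp x <= exp y.
Proof. intros [H|H]; [left; now apply exp_increasing | subst; lra]. Qed.

Lemma exp_lipschitz x y X :
  x <= X -> y <= X -> Rabs (exp x - exp y) <= exp X * Rabs (x - y).
Proof.
  intros Hx Hy.
  destruct (MVT_abs exp exp y x) as [c [Hc Hcxy]].
  { intros c _. apply derivable_pt_lim_exp. }
  rewrite Hc, Rabs_pos_eq by (left; apply exp_pos).
  apply Rmult_le_compat_r; [apply Rabs_pos|]. apply exp_le.
  destruct Hcxy as [_ H]. eapply Rle_trans; [apply H|]. now apply Rmax_lub.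
Qed.

Lemma exp_mul_le t c R C : Rabs t <= R -> Rabs c <= C -> exp (t * c) <= exp (R * C).
Proof.
  intros Ht Hc. apply exp_le. eapply Rle_trans; [apply Rle_abs|].
  rewrite Rabs_mult. apply Rmult_le_compat; auto; apply Rabs_pos.
Qed.

Lemma exp_mul_lipschitz t t0 c R C : Rabs t <= R -> Rabs t0 <= R -> Rabs c <= C ->
  Rabs (exp (t * c) - exp (t0 * c)) <= C * exp (R * C) * Rabs (t - t0).
Proof.
  intros Ht Ht0 Hc.
  assert (Hle : forall s, Rabs s <= R -> s * c <= R * C).
  { intros s Hs. eapply Rle_trans; [apply Rle_abs|].
    rewrite Rabs_mult. apply Rmult_le_compat; auto; apply Rabs_pos. }
  eapply Rle_trans; [apply exp_lipschitz; auto|].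
  replace (t * c - t0 * c) with (c * (t - t0)) by ring.
  rewrite Rabs_mult.
  apply Rle_trans with (exp (R * C) * (C * Rabs (t - t0))); [|right; ring].
  apply Rmult_le_compat_l; [left; apply exp_pos|].
  apply Rmult_le_compat_r; [apply Rabs_pos | auto].
Qed.

Lemma exp_comb_sqr_lipschitz chi c d t t0 R C : 0 <= chi <= 1 ->
  Rabs c <= C -> Rabs d <= C -> Rabs t <= R -> Rabs t0 <= R ->
  Rabs ((chi * exp (t * c) - exp (t * d)) ^ 2 - (chi * exp (t0 * c) - exp (t0 * d)) ^ 2)
  <= 8 * C * exp (R * C) ^ 2 * Rabs (t - t0).
Proof.
  intros Hchi Hc Hd Ht Ht0.
  set (F s := chi * exp (s * c) - exp (s * d)).
  assert (HF : forall s, Rabs s <= R -> Rabs (F s) <= 2 * exp (R * C)).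
  { intros s Hs. unfold F.
    pose proof (exp_mul_le s c R C Hs Hc). pose proof (exp_mul_le s d R C Hs Hd).
    pose proof (exp_pos (s * c)). pose proof (exp_pos (s * d)). apply Rabs_le. nra. }
  assert (HdF : Rabs (F t - F t0) <= 2 * C * exp (R * C) * Rabs (t - t0)).
  { unfold F.
    replace (chi * exp (t * c) - exp (t * d) - (chi * exp (t0 * c) - exp (t0 * d)))
      with (chi * (exp (t * c) - exp (t0 * c)) - (exp (t * d) - exp (t0 * d))) by ring.
    eapply Rle_trans; [apply Rabs_triang|].
    rewrite Rabs_Ropp, Rabs_mult, (Rabs_pos_eq chi) by lra.
    pose proof (exp_mul_lipschitz t t0 c R C Ht Ht0 Hc).
    pose proof (exp_mul_lipschitz t t0 d R C Ht Ht0 Hd).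
    pose proof (Rabs_pos (exp (t * c) - exp (t0 * c))). nra. }
  fold (F t) (F t0).
  replace (F t ^ 2 - F t0 ^ 2) with ((F t - F t0) * (F t + F t0)) by ring.
  rewrite Rabs_mult.
  pose proof (Rabs_triang (F t) (F t0)). pose proof (HF t Ht). pose proof (HF t0 Ht0).
  pose proof (Rabs_pos (F t - F t0)). pose proof (Rabs_pos (F t + F t0)).
  apply Rle_trans with (2 * C * exp (R * C) * Rabs (t - t0) * (4 * exp (R * C))).
  - apply Rmult_le_compat; auto. lra.
  - right. ring.
Qed.

Lemma exp_sqr x : exp x ^ 2 = exp (2 * x).
Proof. replace (2 * x) with (x + x) by ring. rewrite exp_plus. ring. Qed.

Lemma sqr_exp_ln x : 0 < x -> x ^ 2 = exp (2 * ln x).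
Proof.
  intros Hx. replace (2 * ln x) with (ln x + ln x) by ring.
  rewrite exp_plus, exp_ln by auto. ring.
Qed.

Lemma four_exp_ln : 4 = exp (2 * ln 2).
Proof. rewrite <- sqr_exp_ln by lra. ring. Qed.

Lemma ln_2_pos : 0 < ln 2.
Proof. rewrite <- ln_1. apply ln_increasing; lra. Qed.

Lemma Rpower_pos x y : 0 < Rpower x y.
Proof. apply exp_pos. Qed.

Lemma sqr_le_of_abs_le k M : Rabs k <= M -> k ^ 2 <= M ^ 2.
Proof. intros Hk. rewrite <- (pow2_abs k). apply pow_incr. split; [apply Rabs_pos | auto]. Qed.

Lemma Rpower_1_base y : Rpower 1 y = 1.
Proof. unfold Rpower. now rewrite ln_1, Rmult_0_r, exp_0. Qed.

Lemma Rpower_le_1_plus x b : 0 < x -> 0 <= b <= 1 -> Rpower x b <= 1 + x.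
Proof.
  intros Hx Hb. unfold Rpower. destruct (Rle_or_lt (ln x) 0) as [Hl|Hl].
  - assert (exp (b * ln x) <= exp 0) by (apply exp_le; nra). rewrite exp_0 in *. lra.
  - assert (exp (b * ln x) <= exp (ln x)) by (apply exp_le; nra). rewrite exp_ln in *; lra.
Qed.

Lemma Rpower_le_base_lt1 x a b : 0 < x < 1 -> b <= a -> Rpower x a <= Rpower x b.
Proof.
  intros Hx Hab. apply exp_le.
  assert (ln x < 0) by (rewrite <- ln_1; apply ln_increasing; lra). nra.
Qed.

Lemma Rpower_mult_sqr s k y : 0 < s -> k <> 0 ->
  Rpower (s * k ^ 2) y = Rpower s y * Rpower (Rabs k) (2 * y).
Proof.
  intros Hs Hk. assert (0 < Rabs k) by now apply Rabs_pos_lt.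
  unfold Rpower. rewrite <- exp_plus, <- pow2_abs, ln_mult, ln_pow by (auto; apply pow_lt; auto).
  f_equal. simpl. ring.
Qed.

Lemma inv_1_plus_le_Rpower x b : 0 < x -> 0 <= b <= 1 -> / (1 + x) <= Rpower x (- b).
Proof.
  intros Hx Hb. rewrite Rpower_Ropp. apply Rinv_le_contravar; [apply Rpower_pos|].
  now apply Rpower_le_1_plus.
Qed.

Lemma exp_neg2_le_Rpower x b : 0 < x -> 0 <= b <= 1 -> exp (- 2 * x) <= Rpower x (- b).
Proof.
  intros Hx Hb. eapply Rle_trans; [|now apply inv_1_plus_le_Rpower].
  replace (- 2 * x) with (- (2 * x)) by ring. rewrite exp_Ropp.
  apply Rinv_le_contravar; [lra|]. pose proof (exp_ineq1_le (2 * x)). lra.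
Qed.

Lemma sqr_mul_exp_neg2_le_Rpower x b : 0 < x -> 0 <= b <= 1 ->
  x ^ 2 * exp (- 2 * x) <= 2 * Rpower x (- b).
Proof.
  intros Hx Hb.
  apply Rle_trans with (2 * / (1 + x)); [|pose proof (inv_1_plus_le_Rpower x b Hx Hb); lra].
  assert (Hexp : (1 + x / 2) ^ 4 <= exp (2 * x)).
  { replace (2 * x) with (x / 2 + x / 2 + x / 2 + x / 2) by field.
    rewrite !exp_plus. replace (exp (x / 2) * exp (x / 2) * exp (x / 2) * exp (x / 2))
      with (exp (x / 2) ^ 4) by ring.
    apply pow_incr. pose proof (exp_ineq1_le (x / 2)). lra. }
  replace (- 2 * x) with (- (2 * x)) by ring. rewrite exp_Ropp.
  assert (0 < exp (2 * x)) by apply exp_pos.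
  apply Rmult_le_reg_r with (exp (2 * x) * (1 + x)); [nra|].
  field_simplify; [|lra|lra]. nra.
Qed.

(** * Continuity and Riemann integrals *)

Lemma continuous_eps_delta (f : R -> R) x :
  (forall e, 0 < e -> exists d, 0 < d /\
     forall y, Rabs (y - x) < d -> Rabs (f y - f x) < e) ->
  continuous f x.
Proof.
  intros H. apply continuity_pt_filterlim. intros e He.
  destruct (H e He) as [d [Hd Hfd]]. exists d; split; auto.
  intros y [_ Hy]. now apply Hfd.
Qed.

Lemma continuous_of_lipschitz_at (f : R -> R) x L :
  (forall y, Rabs (y - x) < 1 -> Rabs (f y - f x) <= L * Rabs (y - x)) ->
  continuous f x.
Proof.
  intros Hf. apply continuous_eps_delta. intros e He.
  set (L' := Rabs L + 1).
  exists (Rmin 1 (e / L')). split.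
  { apply Rmin_pos; [lra|]. apply Rdiv_lt_0_compat; unfold L'; [lra|].
    pose proof (Rabs_pos L); lra. }
  intros y Hy.
  assert (Hy1 : Rabs (y - x) < 1) by (eapply Rlt_le_trans; [apply Hy | apply Rmin_l]).
  assert (Hye : Rabs (y - x) < e / L') by (eapply Rlt_le_trans; [apply Hy | apply Rmin_r]).
  assert (HL' : 0 < L') by (unfold L'; pose proof (Rabs_pos L); lra).
  apply Rmult_lt_compat_l with (r := L') in Hye; [|lra].
  replace (L' * (e / L')) with e in Hye by (field; lra).
  eapply Rle_lt_trans; [apply Hf; auto|].
  pose proof (Rle_abs L). pose proof (Rabs_pos (y - x)). unfold L' in *. nra.
Qed.

Lemma RI_RInt f a b : ex_RInt f a b -> RI f a b = RInt f a b.
Proof.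
  intros H. unfold RI.
  destruct (epsilon_spec (inhabits 0)
    (fun v => exists pr : Riemann_integrable f a b, RiemannInt pr = v))
    as [pr Hpr].
  { exists (RiemannInt (ex_RInt_Reals_0 _ _ _ H)). now exists (ex_RInt_Reals_0 _ _ _ H). }
  now rewrite <- Hpr, (RInt_Reals f a b pr).
Qed.

Lemma RInt_le_scal (f g : R -> R) a b c : a <= b -> ex_RInt f a b -> ex_RInt g a b ->
  (forall x, a < x < b -> f x <= c * g x) -> RInt f a b <= c * RInt g a b.
Proof.
  intros Hab Hf Hg Hfg.
  change (c * RInt g a b) with (scal c (RInt g a b)).
  rewrite <- (RInt_scal (V := R_CompleteNormedModule) g a b c Hg).
  apply RInt_le; auto. now apply (ex_RInt_scal (V := R_NormedModule)).
Qed.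

Lemma ex_RInt_piecewise_continuous (f g h : R -> R) c a b : a <= b ->
  (forall x, x < c -> f x = g x) -> (forall x, c < x -> f x = h x) ->
  (forall x, continuous g x) -> (forall x, continuous h x) ->
  ex_RInt f a b.
Proof.
  intros Hab Hg Hh Cg Ch.
  assert (Left : forall u v, u <= v <= c -> ex_RInt f u v).
  { intros u v Huv. apply (ex_RInt_ext g).
    - intros x Hx. rewrite Rmax_right in Hx by lra. symmetry; apply Hg; lra.
    - apply (ex_RInt_continuous (V := R_CompleteNormedModule)); auto. }
  assert (Right : forall u v, c <= u <= v -> ex_RInt f u v).
  { intros u v Huv. apply (ex_RInt_ext h).
    - intros x Hx. rewrite Rmin_left in Hx by lra. symmetry; apply Hh; lra.
    - apply (ex_RInt_continuous (V := R_CompleteNormedModule)); auto. }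
  destruct (Rle_or_lt b c); [apply Left; lra|].
  destruct (Rle_or_lt c a); [apply Right; lra|].
  apply ex_RInt_Chasles with c; [apply Left | apply Right]; lra.
Qed.

Lemma RInt_param_continuous (f : R -> R -> R) a b t0 L : a <= b ->
  (forall t, ex_RInt (f t) a b) ->
  (forall t k, Rabs (t - t0) < 1 -> a <= k <= b ->
     Rabs (f t k - f t0 k) <= L * Rabs (t - t0)) ->
  continuous (fun t => RInt (f t) a b) t0.
Proof.
  intros Hab Hint Hlip. apply continuous_of_lipschitz_at with ((b - a) * L).
  intros t Ht.
  rewrite <- (RInt_minus (V := R_CompleteNormedModule)) by auto.
  rewrite Rmult_assoc. apply abs_RInt_le_const; [exact Hab | | intros k Hk; now apply Hlip].
  apply (ex_RInt_minus (V := R_NormedModule)); auto.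
Qed.

Lemma is_RInt_Rpower_affine c s q a b : s <> 0 -> q + 1 <> 0 ->
  (forall x, Rmin a b <= x <= Rmax a b -> 0 < c + s * x) ->
  is_RInt (fun x => Rpower (c + s * x) q) a b
    ((Rpower (c + s * b) (q + 1) - Rpower (c + s * a) (q + 1)) / (s * (q + 1))).
Proof.
  intros Hs Hq Hpos.
  replace ((Rpower (c + s * b) (q + 1) - Rpower (c + s * a) (q + 1)) / (s * (q + 1)))
    with (minus (Rpower (c + s * b) (q + 1) / (s * (q + 1)))
                (Rpower (c + s * a) (q + 1) / (s * (q + 1))))
    by (unfold minus, plus, opp; simpl; field; auto).
  apply (is_RInt_derive (V := R_CompleteNormedModule)
           (fun x => Rpower (c + s * x) (q + 1) / (s * (q + 1)))).
  - intros x Hx. specialize (Hpos x Hx). unfold Rpower. auto_derive; [lra|].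
    replace ((q + 1) * ln (c + s * x)) with (q * ln (c + s * x) + ln (c + s * x)) by ring.
    rewrite exp_plus, exp_ln by auto. field. repeat split; auto; lra.
  - intros x Hx. specialize (Hpos x Hx). unfold Rpower.
    apply (ex_derive_continuous (V := R_NormedModule)). auto_derive. lra.
Qed.

Lemma RInt_Rpower_one_plus_abs eps p M : 0 < eps -> 1 < p -> 0 < M ->
  ex_RInt (fun k => Rpower (1 + eps * Rabs k) (- p)) (- M) M /\
  RInt (fun k => Rpower (1 + eps * Rabs k) (- p)) (- M) M <= 2 / (eps * (p - 1)).
Proof.
  intros He Hp HM.
  set (V := (1 - Rpower (1 + eps * M) (- p + 1)) / (eps * (p - 1))).
  assert (Hright : is_RInt (fun k => Rpower (1 + eps * Rabs k) (- p)) 0 M V).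
  { apply (is_RInt_ext (fun k => Rpower (1 + eps * k) (- p))).
    - intros k Hk. rewrite Rmin_left, Rmax_right in Hk by lra. now rewrite Rabs_pos_eq by lra.
    - replace V with ((Rpower (1 + eps * M) (- p + 1) - Rpower (1 + eps * 0) (- p + 1))
                      / (eps * (- p + 1))).
      + apply is_RInt_Rpower_affine; try lra.
        intros k Hk. rewrite Rmin_left, Rmax_right in Hk by lra. nra.
      + unfold V. rewrite Rmult_0_r, Rplus_0_r, Rpower_1_base. field; lra. }
  assert (Hleft : is_RInt (fun k => Rpower (1 + eps * Rabs k) (- p)) (- M) 0 V).
  { apply (is_RInt_ext (fun k => Rpower (1 + - eps * k) (- p))).
    - intros k Hk. rewrite Rmin_left, Rmax_right in Hk by lra.
      rewrite Rabs_left by lra. f_equal. ring.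
    - replace V with ((Rpower (1 + - eps * 0) (- p + 1) - Rpower (1 + - eps * - M) (- p + 1))
                      / (- eps * (- p + 1))).
      + apply is_RInt_Rpower_affine; try lra.
        intros k Hk. rewrite Rmin_left, Rmax_right in Hk by lra. nra.
      + unfold V. rewrite Rmult_0_r, Rplus_0_r, Rpower_1_base.
        replace (- eps * - M) with (eps * M) by ring. field; lra. }
  pose proof (is_RInt_Chasles _ _ _ _ _ _ Hleft Hright) as Hall.
  split; [eexists; eauto|].
  rewrite (is_RInt_unique _ _ _ _ Hall).
  change (plus V V) with (V + V). unfold V.
  assert (0 < Rpower (1 + eps * M) (- p + 1)) by apply Rpower_pos.
  assert (0 < / (eps * (p - 1))) by (apply Rinv_0_lt_compat; nra).
  unfold Rdiv. nra.
Qed.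

Lemma RInt_Rpower_shift d b T : 0 < d <= 1 -> 0 < b < 1 -> 0 < T ->
  ex_RInt (fun t => Rpower (t + d) (- b)) 0 T /\
  RInt (fun t => Rpower (t + d) (- b)) 0 T <= (T + 2) / (1 - b).
Proof.
  intros Hd Hb HT.
  assert (H : is_RInt (fun t => Rpower (t + d) (- b)) 0 T
    ((Rpower (d + 1 * T) (- b + 1) - Rpower (d + 1 * 0) (- b + 1)) / (1 * (- b + 1)))).
  { apply (is_RInt_ext (fun t => Rpower (d + 1 * t) (- b))).
    - intros t _. f_equal. ring.
    - apply is_RInt_Rpower_affine; try lra.
      intros t Ht. rewrite Rmin_left, Rmax_right in Ht by lra. lra. }
  split; [eexists; eauto|].
  rewrite (is_RInt_unique _ _ _ _ H).
  pose proof (Rpower_le_1_plus (d + 1 * T) (- b + 1) ltac:(lra) ltac:(lra)).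
  assert (0 < Rpower (d + 1 * 0) (- b + 1)) by apply Rpower_pos.
  assert (0 < / (1 - b)) by (apply Rinv_0_lt_compat; lra).
  replace (1 * (- b + 1)) with (1 - b) by ring. unfold Rdiv. nra.
Qed.

(** * The kernel *)

Lemma chi_eps_range eps k : 0 <= chi_eps eps k <= 1.
Proof. unfold chi_eps. destruct Rlt_dec; lra. Qed.

Lemma chi_eps_one eps k : 0 < eps -> - / eps < k -> chi_eps eps k = 1 /\ - 1 < k * eps.
Proof.
  intros He Hk. unfold chi_eps. destruct Rlt_dec; [|lra]. split; auto.
  apply Rmult_lt_compat_r with (r := eps) in Hk; auto.
  now replace (- / eps * eps) with (-1) in Hk by (field; lra).
Qed.

Lemma one_le_sqr_2_plus x : - 1 < x -> 1 <= (2 + x) ^ 2.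
Proof. intros Hx. assert (0 < (1 + x) * (3 + x)) by (apply Rmult_lt_0_compat; lra). nra. Qed.

Lemma neg_time_symbol_le tau eps k : 0 <= tau -> - 1 < k * eps ->
  - tau * ((2 + k * eps) ^ 2 * k ^ 2) <= - tau * k ^ 2.
Proof.
  intros Ht Hk. pose proof (one_le_sqr_2_plus _ Hk).
  assert (0 <= tau * k ^ 2 * ((2 + k * eps) ^ 2 - 1))
    by (apply Rmult_le_pos; [apply Rmult_le_pos; [lra | apply pow2_ge_0] | lra]).
  nra.
Qed.

Lemma fker_eq nu eps t k : fker nu eps t k =
  chi_eps eps k * exp (t * (nu - (2 + k * eps) ^ 2 * k ^ 2)) - exp (t * (nu - 4 * k ^ 2)).
Proof.
  unfold fker.
  replace (t * (nu - (2 + k * eps) ^ 2 * k ^ 2))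
    with (t * nu + - t * ((2 + k * eps) ^ 2 * k ^ 2)) by ring.
  replace (t * (nu - 4 * k ^ 2)) with (t * nu + - 4 * t * k ^ 2) by ring.
  rewrite !exp_plus. ring.
Qed.

Lemma exp_time_nu_sqr_le nu tau T : Rabs nu <= 1 -> 0 <= tau <= T ->
  exp (tau * nu) ^ 2 <= exp (2 * T).
Proof. intros Hnu Ht. rewrite exp_sqr. apply exp_le. apply Rabs_le_between in Hnu. nra. Qed.

Lemma fker_sqr_le_gauss nu eps tau T k : Rabs nu <= 1 -> 0 < eps -> 0 <= tau <= T ->
  fker nu eps tau k ^ 2 <= exp (2 * T) * exp (- 2 * tau * k ^ 2).
Proof.
  intros Hnu He Ht. unfold fker. rewrite Rpow_mult_distr.
  apply Rmult_le_compat; [apply pow2_ge_0 | apply pow2_ge_0 | now apply exp_time_nu_sqr_le |].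
  replace (exp (- 2 * tau * k ^ 2)) with (exp (- tau * k ^ 2) ^ 2)
    by (rewrite exp_sqr; f_equal; ring).
  assert (Hgauss : 0 <= chi_eps eps k * exp (- tau * ((2 + k * eps) ^ 2 * k ^ 2))
                     <= exp (- tau * k ^ 2)).
  { unfold chi_eps. destruct Rlt_dec as [Hk|Hk].
    - destruct (chi_eps_one eps k He Hk) as [_ Hke].
      rewrite Rmult_1_l. split; [left; apply exp_pos|]. apply exp_le.
      apply neg_time_symbol_le; lra.
    - rewrite Rmult_0_l. split; [lra | left; apply exp_pos]. }
  assert (0 < exp (- 4 * tau * k ^ 2) <= exp (- tau * k ^ 2)).
  { split; [apply exp_pos|]. apply exp_le. pose proof (pow2_ge_0 k). nra. }
  nra.
Qed.

Lemma fker_sqr_le_low_freq nu eps tau T k : Rabs nu <= 1 -> 0 < eps -> 0 <= tau <= T ->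
  - / eps < k -> Rabs k * eps <= 1 ->
  fker nu eps tau k ^ 2
  <= 25 * exp (2 * T) * (eps ^ 2 * tau ^ 2 * k ^ 6 * exp (- 2 * tau * k ^ 2)).
Proof.
  intros Hnu He Ht Hk Hke. destruct (chi_eps_one eps k He Hk) as [Hchi Hk1].
  unfold fker. rewrite Hchi, Rmult_1_l, Rpow_mult_distr.
  assert (Hdiff : Rabs (exp (- tau * ((2 + k * eps) ^ 2 * k ^ 2)) - exp (- 4 * tau * k ^ 2))
                  <= exp (- tau * k ^ 2) * (tau * (5 * eps * Rabs k ^ 3))).
  { eapply Rle_trans; [apply exp_lipschitz|].
    - apply neg_time_symbol_le; lra.
    - pose proof (pow2_ge_0 k). nra.
    - apply Rmult_le_compat_l; [left; apply exp_pos|].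
      replace (- tau * ((2 + k * eps) ^ 2 * k ^ 2) - - 4 * tau * k ^ 2)
        with (- (tau * (k ^ 2 * (k * eps) * (4 + k * eps)))) by ring.
      rewrite Rabs_Ropp, !Rabs_mult, (Rabs_pos_eq tau), (Rabs_pos_eq eps) by lra.
      rewrite <- (pow2_abs k), (Rabs_pos_eq (Rabs k ^ 2)) by apply pow2_ge_0.
      assert (Rabs (4 + k * eps) <= 5).
      { assert (Rabs (k * eps) <= 1) by (rewrite Rabs_mult, (Rabs_pos_eq eps); lra).
        apply Rabs_le_between in H. apply Rabs_le. lra. }
      pose proof (Rabs_pos k). pose proof (Rabs_pos (4 + k * eps)).
      assert (0 <= Rabs k ^ 2 * Rabs k * eps)
        by (apply Rmult_le_pos; [|lra]; apply Rmult_le_pos; [apply pow2_ge_0|lra]).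
      apply Rmult_le_compat_l; [lra|].
      replace (Rabs k ^ 2 * (Rabs k * eps) * Rabs (4 + k * eps))
        with (Rabs k ^ 2 * Rabs k * eps * Rabs (4 + k * eps)) by ring.
      replace (5 * eps * Rabs k ^ 3) with (Rabs k ^ 2 * Rabs k * eps * 5) by ring.
      apply Rmult_le_compat_l; auto. }
  match goal with |- _ <= 25 * exp (2 * T) * ?X =>
    replace (25 * exp (2 * T) * X) with (exp (2 * T) * (25 * X)) by ring end.
  apply Rmult_le_compat; [apply pow2_ge_0 | apply pow2_ge_0 | now apply exp_time_nu_sqr_le |].
  rewrite <- pow2_abs. eapply Rle_trans; [apply pow_incr; split; [apply Rabs_pos | apply Hdiff]|].
  replace (exp (- 2 * tau * k ^ 2)) with (exp (- tau * k ^ 2) ^ 2)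
    by (rewrite exp_sqr; f_equal; ring).
  replace (k ^ 6) with ((k ^ 2) ^ 3) by ring. rewrite <- (pow2_abs k). right. ring.
Qed.

Lemma abspow_nonneg k b : 0 <= abspow k b.
Proof. unfold abspow. destruct Req_EM_T; [lra | left; apply exp_pos]. Qed.

Lemma abspow_le k b M : 0 <= b -> Rabs k <= M -> abspow k b <= Rpower M b.
Proof.
  intros Hb Hk. unfold abspow. destruct Req_EM_T as [|Hk0]; [left; apply exp_pos|].
  apply Rle_Rpower_l; auto. split; auto. now apply Rabs_pos_lt.
Qed.

Lemma abspow_continuous a k : 0 < a -> continuous (fun y => abspow y a) k.
Proof.
  intros Ha. destruct (Req_EM_T k 0) as [->|Hk].
  - apply continuous_eps_delta. intros e He.
    exists (Rpower e (/ a)). split; [apply Rpower_pos|].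
    intros y Hy. rewrite Rminus_0_r in Hy. unfold abspow at 2.
    destruct (Req_EM_T 0 0) as [_|]; [|lra]. rewrite Rminus_0_r.
    unfold abspow. destruct (Req_EM_T y 0); [rewrite Rabs_R0; lra|].
    rewrite Rabs_pos_eq by (left; apply exp_pos).
    replace e with (Rpower (Rpower e (/ a)) a)
      by (rewrite Rpower_mult, Rinv_l, Rpower_1 by lra; reflexivity).
    apply Rlt_Rpower_l; [lra|]. split; [now apply Rabs_pos_lt | auto].
  - apply (continuous_ext_loc _ (fun y => Rpower (Rabs y) a)).
    + exists (mkposreal (Rabs k) (Rabs_pos_lt k Hk)). intros y Hy.
      unfold abspow. destruct (Req_EM_T y 0) as [->|]; [|reflexivity].
      exfalso. unfold ball in Hy; simpl in Hy; unfold AbsRing_ball in Hy; simpl in Hy.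
      unfold minus, plus, opp in Hy; simpl in Hy.
      rewrite Rplus_0_l, Rabs_Ropp in Hy. lra.
    + unfold Rpower. apply (ex_derive_continuous (V := R_NormedModule)). auto_derive.
      split; [auto|split; [now apply Rabs_pos_lt|auto]].
Qed.

Lemma integrand_nonzero_freq nu eps gam tau k : k <> 0 ->
  integrand nu eps gam tau k = fker nu eps tau k ^ 2 * (Rpower (Rabs k) (2 * gam) + 1).
Proof.
  intros Hk. unfold integrand, abspow. rewrite pow2_abs.
  now destruct Req_EM_T.
Qed.

Lemma integrand_ex_RInt nu eps gam tau a b : 0 < eps -> 0 < gam -> a <= b ->
  ex_RInt (integrand nu eps gam tau) a b.
Proof.
  intros He Hg Hab.
  set (branch c := fun k => (Rabs (exp (tau * nu) * (c * exp (- tau * ((2 + k * eps) ^ 2 * k ^ 2))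
                               - exp (- 4 * tau * k ^ 2)))) ^ 2 * (abspow k (2 * gam) + 1)).
  assert (Hbranch : forall c k, continuous (branch c) k).
  { intros c k. unfold branch.
    apply (continuous_mult (fun k => _ ^ 2) (fun k => abspow k (2 * gam) + 1)).
    - apply (continuous_ext (fun k => (exp (tau * nu) *
          (c * exp (- tau * ((2 + k * eps) ^ 2 * k ^ 2)) - exp (- 4 * tau * k ^ 2))) ^ 2)).
      + intros y. now rewrite pow2_abs.
      + apply (ex_derive_continuous (V := R_NormedModule)). auto_derive. auto.
    - apply (continuous_plus (fun k => abspow k (2 * gam)) (fun _ => 1)).
      + apply abspow_continuous. lra.
      + apply continuous_const. }
  apply (ex_RInt_piecewise_continuous _ (branch 0) (branch 1) (- / eps)); auto.
  - intros k Hk. unfold integrand, fker, chi_eps, branch. destruct Rlt_dec; [lra | reflexivity].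
  - intros k Hk. unfold integrand, fker, chi_eps, branch. destruct Rlt_dec; [reflexivity | lra].
Qed.

Lemma integrand_lipschitz_in_time nu eps gam M R : 0 < gam ->
  exists L, forall t t0 k, Rabs t <= R -> Rabs t0 <= R -> Rabs k <= M ->
    Rabs (integrand nu eps gam t k - integrand nu eps gam t0 k) <= L * Rabs (t - t0).
Proof.
  intros Hg.
  set (C := Rabs nu + (2 + M * Rabs eps) ^ 2 * M ^ 2 + 4 * M ^ 2).
  exists (8 * C * exp (R * C) ^ 2 * (Rpower M (2 * gam) + 1)).
  intros t t0 k Ht Ht0 Hk.
  assert (Hk2 : k ^ 2 <= M ^ 2) by now apply sqr_le_of_abs_le.
  assert (Ha : (2 + k * eps) ^ 2 * k ^ 2 <= (2 + M * Rabs eps) ^ 2 * M ^ 2).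
  { apply Rmult_le_compat; [apply pow2_ge_0 | apply pow2_ge_0 | | auto].
    rewrite <- (pow2_abs (2 + k * eps)). apply pow_incr. split; [apply Rabs_pos|].
    eapply Rle_trans; [apply Rabs_triang|]. rewrite Rabs_mult, (Rabs_pos_eq 2) by lra.
    pose proof (Rabs_pos eps). pose proof (Rabs_pos k). nra. }
  assert (Hc : Rabs (nu - (2 + k * eps) ^ 2 * k ^ 2) <= C).
  { unfold C. eapply Rle_trans; [apply Rabs_triang|].
    rewrite Rabs_Ropp, (Rabs_pos_eq (_ * _)) by (apply Rmult_le_pos; apply pow2_ge_0).
    pose proof (pow2_ge_0 M). lra. }
  assert (Hd : Rabs (nu - 4 * k ^ 2) <= C).
  { unfold C. eapply Rle_trans; [apply Rabs_triang|].
    rewrite Rabs_Ropp, (Rabs_pos_eq (4 * _)) by (pose proof (pow2_ge_0 k); lra).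
    assert (0 <= (2 + M * Rabs eps) ^ 2 * M ^ 2) by (apply Rmult_le_pos; apply pow2_ge_0). lra. }
  unfold integrand. rewrite !pow2_abs, !fker_eq, <- Rmult_minus_distr_r, Rabs_mult.
  pose proof (abspow_le k (2 * gam) M ltac:(lra) Hk). pose proof (abspow_nonneg k (2 * gam)).
  rewrite (Rabs_pos_eq (abspow k (2 * gam) + 1)) by lra.
  pose proof (exp_comb_sqr_lipschitz _ _ _ t t0 R C (chi_eps_range eps k) Hc Hd Ht Ht0).
  rewrite Rmult_assoc, (Rmult_comm (_ + 1)), <- Rmult_assoc.
  apply Rmult_le_compat; [apply Rabs_pos | lra | auto | lra].
Qed.

Lemma inner_integral_continuous nu eps gam M t0 : 0 < eps -> 0 < gam -> 0 < M ->
  continuous (fun t => RInt (integrand nu eps gam t) (- M) M) t0.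
Proof.
  intros He Hg HM.
  destruct (integrand_lipschitz_in_time nu eps gam M (Rabs t0 + 1) Hg) as [L HL].
  apply RInt_param_continuous with L; [lra | intros; apply integrand_ex_RInt; lra |].
  intros t k Ht Hk. apply HL; [| lra | apply Rabs_le; lra].
  replace t with (t0 + (t - t0)) by ring.
  pose proof (Rabs_triang t0 (t - t0)). lra.
Qed.

(** * Pointwise bound *)

Section PointwiseBound.

Variables (nu eps gam bt T tau d k : R).

Hypotheses (Hnu : Rabs nu <= 1) (Heps : 0 < eps < 1) (Hgam : 0 < gam)
  (Hbt : bt <= 1) (Hp : 0 <= 2 * bt - 2 * gam <= 2)
  (Htau : 0 <= tau <= T) (Hd : 0 < d) (Hdk : 2 * d * k ^ 2 <= 1).

Let p := 2 * bt - 2 * gam.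

Lemma gauss_le_shifted_power : k <> 0 ->
  exp (- 2 * tau * k ^ 2) <= exp 1 * (Rpower (tau + d) (- bt) * Rpower (Rabs k) (- 2 * bt)).
Proof.
  intros Hk. assert (0 < k ^ 2) by (apply pow2_gt_0; auto).
  replace (- 2 * tau * k ^ 2) with (2 * d * k ^ 2 + - 2 * ((tau + d) * k ^ 2)) by ring.
  rewrite exp_plus.
  apply Rmult_le_compat; [left; apply exp_pos | left; apply exp_pos | now apply exp_le |].
  replace (- 2 * bt) with (2 * - bt) by ring. rewrite <- Rpower_mult_sqr by lra.
  apply exp_neg2_le_Rpower; nra.
Qed.

Lemma sqr_gauss_le_shifted_power : k <> 0 ->
  tau ^ 2 * k ^ 4 * exp (- 2 * tau * k ^ 2)
  <= 2 * exp 1 * (Rpower (tau + d) (- bt) * Rpower (Rabs k) (- 2 * bt)).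
Proof.
  intros Hk. assert (0 < k ^ 2) by (apply pow2_gt_0; auto).
  set (x := (tau + d) * k ^ 2).
  assert (Hx : 0 < x) by (unfold x; nra).
  replace (- 2 * tau * k ^ 2) with (2 * d * k ^ 2 + - 2 * x) by (unfold x; ring).
  replace (- 2 * bt) with (2 * - bt) by ring. rewrite <- Rpower_mult_sqr by lra. fold x.
  pose proof (sqr_mul_exp_neg2_le_Rpower x bt Hx ltac:(lra)).
  assert (tau ^ 2 * k ^ 4 <= x ^ 2) by (unfold x; nra).
  rewrite exp_plus.
  assert (exp (2 * d * k ^ 2) <= exp 1) by (apply exp_le; lra).
  pose proof (exp_pos (2 * d * k ^ 2)). pose proof (exp_pos (- 2 * x)).
  apply Rle_trans with (x ^ 2 * (exp 1 * exp (- 2 * x))).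
  - apply Rmult_le_compat; [| |auto|apply Rmult_le_compat_r; lra].
    + replace (k ^ 4) with ((k ^ 2) ^ 2) by ring. pose proof (pow2_ge_0 tau). nra.
    + nra.
  - pose proof (exp_pos 1). nra.
Qed.

Lemma high_freq_weight_le : 1 <= eps * Rabs k ->
  Rpower (Rabs k) (- 2 * bt) * (Rpower (Rabs k) (2 * gam) + 1)
  <= 8 * (Rpower eps p * Rpower (1 + eps * Rabs k) (- p)).
Proof.
  intros Hhigh. assert (Hk1 : 1 < Rabs k) by nra.
  assert (Hweight : Rpower (Rabs k) (2 * gam) + 1 <= 2 * Rpower (Rabs k) (2 * gam)).
  { pose proof (Rle_Rpower (Rabs k) 0 (2 * gam) ltac:(lra) ltac:(lra)).
    rewrite Rpower_O in * by lra. lra. }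
  assert (Hfreq : Rpower (Rabs k) (- 2 * bt) * Rpower (Rabs k) (2 * gam)
                  <= 4 * (Rpower eps p * Rpower (1 + eps * Rabs k) (- p))).
  { rewrite four_exp_ln. unfold Rpower. rewrite <- !exp_plus. apply exp_le.
    assert (ln (1 + eps * Rabs k) <= ln 2 + ln eps + ln (Rabs k)).
    { rewrite <- !ln_mult by lra. apply ln_le; nra. }
    pose proof ln_2_pos. unfold p in *. nra. }
  assert (0 < Rpower (Rabs k) (- 2 * bt)) by apply Rpower_pos.
  nra.
Qed.

Lemma low_freq_weight_le : k <> 0 -> eps * Rabs k < 1 ->
  eps ^ 2 * k ^ 2 * Rpower (Rabs k) (- 2 * bt) * (Rpower (Rabs k) (2 * gam) + 1)
  <= 8 * (Rpower eps p * Rpower (1 + eps * Rabs k) (- p)).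
Proof.
  intros Hk Hlow. assert (Hk0 : 0 < Rabs k) by now apply Rabs_pos_lt.
  assert (Hln : ln eps < 0) by (rewrite <- ln_1; apply ln_increasing; lra).
  assert (Hle : ln eps + ln (Rabs k) < 0).
  { rewrite <- ln_mult, <- ln_1 by lra. apply ln_increasing; nra. }
  assert (Hfreq : eps ^ 2 * k ^ 2 * Rpower (Rabs k) (- 2 * bt) <= Rpower eps (2 * bt)).
  { rewrite <- (pow2_abs k), !sqr_exp_ln by lra. unfold Rpower. rewrite <- !exp_plus.
    apply exp_le.
    assert (0 <= (1 - bt) * - (ln eps + ln (Rabs k))) by (apply Rmult_le_pos; lra).
    nra. }
  assert (Hweight : Rpower (Rabs k) (2 * gam) + 1 <= 2 * Rpower eps (- 2 * gam)).
  { assert (Rpower (Rabs k) (2 * gam) <= Rpower eps (- 2 * gam)) by (apply exp_le; nra).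
    assert (1 <= Rpower eps (- 2 * gam)) by (rewrite <- exp_0; apply exp_le; nra).
    lra. }
  assert (Hdecay : 1 <= 4 * Rpower (1 + eps * Rabs k) (- p)).
  { rewrite four_exp_ln. unfold Rpower. rewrite <- exp_plus, <- exp_0 at 1. apply exp_le.
    assert (0 <= ln (1 + eps * Rabs k) <= ln 2) by (rewrite <- ln_1; split; apply ln_le; nra).
    assert (0 <= (2 - p) * ln (1 + eps * Rabs k)) by (apply Rmult_le_pos; unfold p; lra).
    unfold p in *. nra. }
  assert (Hp_split : Rpower eps (2 * bt) * Rpower eps (- 2 * gam) = Rpower eps p).
  { unfold p. rewrite <- Rpower_plus. f_equal. ring. }
  assert (0 < Rpower eps p) by apply Rpower_pos.
  assert (0 <= eps ^ 2 * k ^ 2 * Rpower (Rabs k) (- 2 * bt))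
    by (apply Rmult_le_pos; [apply Rmult_le_pos; apply pow2_ge_0 | left; apply exp_pos]).
  apply Rle_trans with (Rpower eps (2 * bt) * (2 * Rpower eps (- 2 * gam))).
  - apply Rmult_le_compat; auto.
    pose proof (Rpower_pos (Rabs k) (2 * gam)). lra.
  - rewrite <- Hp_split in *. nra.
Qed.

Lemma integrand_le_high_freq : 1 <= eps * Rabs k ->
  integrand nu eps gam tau k <= 8 * exp (2 * T + 1) *
    (Rpower (tau + d) (- bt) * (Rpower eps p * Rpower (1 + eps * Rabs k) (- p))).
Proof.
  intros Hhigh.
  assert (Hk : k <> 0) by (intros ->; rewrite Rabs_R0 in Hhigh; lra).
  rewrite integrand_nonzero_freq by auto.
  set (S := Rpower (tau + d) (- bt)).
  assert (Hfker : fker nu eps tau k ^ 2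
                  <= exp (2 * T) * exp 1 * S * Rpower (Rabs k) (- 2 * bt)).
  { eapply Rle_trans; [apply (fker_sqr_le_gauss nu eps tau T k); auto; lra|].
    replace (exp (2 * T) * exp 1 * S * Rpower (Rabs k) (- 2 * bt))
      with (exp (2 * T) * (exp 1 * (S * Rpower (Rabs k) (- 2 * bt)))) by ring.
    apply Rmult_le_compat_l; [left; apply exp_pos|]. now apply gauss_le_shifted_power. }
  assert (0 < exp (2 * T) * exp 1 * S)
    by (repeat apply Rmult_lt_0_compat; apply exp_pos).
  assert (0 <= Rpower (Rabs k) (2 * gam) + 1) by (pose proof (Rpower_pos (Rabs k) (2 * gam)); lra).
  pose proof (high_freq_weight_le Hhigh).
  rewrite exp_plus. eapply Rle_trans; [apply Rmult_le_compat_r; [auto | apply Hfker]|].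
  rewrite !Rmult_assoc in *. nra.
Qed.

Lemma integrand_le_low_freq : k <> 0 -> eps * Rabs k < 1 ->
  integrand nu eps gam tau k <= 400 * exp (2 * T + 1) *
    (Rpower (tau + d) (- bt) * (Rpower eps p * Rpower (1 + eps * Rabs k) (- p))).
Proof.
  intros Hk Hlow.
  rewrite integrand_nonzero_freq by auto.
  set (S := Rpower (tau + d) (- bt)).
  assert (Hfker : fker nu eps tau k ^ 2
                  <= 50 * (exp (2 * T) * exp 1 * S)
                       * (eps ^ 2 * k ^ 2 * Rpower (Rabs k) (- 2 * bt))).
  { eapply Rle_trans; [apply (fker_sqr_le_low_freq nu eps tau T k); auto; try lra|].
    - assert (Rabs k < / eps) by (apply Rmult_lt_reg_r with eps; [lra|]; rewrite Rinv_l; lra).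
      apply Rabs_lt_between in H. lra.
    - replace (25 * exp (2 * T) * (eps ^ 2 * tau ^ 2 * k ^ 6 * exp (- 2 * tau * k ^ 2)))
        with (25 * exp (2 * T) * (eps ^ 2 * k ^ 2) * (tau ^ 2 * k ^ 4 * exp (- 2 * tau * k ^ 2)))
        by ring.
      eapply Rle_trans; [apply Rmult_le_compat_l; [|now apply sqr_gauss_le_shifted_power]|].
      + apply Rmult_le_pos; [pose proof (exp_pos (2 * T)); lra|].
        apply Rmult_le_pos; apply pow2_ge_0.
      + right. unfold S. ring. }
  assert (0 < exp (2 * T) * exp 1 * S)
    by (repeat apply Rmult_lt_0_compat; apply exp_pos).
  assert (0 <= Rpower (Rabs k) (2 * gam) + 1) by (pose proof (Rpower_pos (Rabs k) (2 * gam)); lra).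
  pose proof (low_freq_weight_le Hk Hlow).
  rewrite exp_plus. eapply Rle_trans; [apply Rmult_le_compat_r; [auto | apply Hfker]|].
  rewrite !Rmult_assoc in *. nra.
Qed.

Lemma integrand_le_profile :
  integrand nu eps gam tau k <= 400 * exp (2 * T + 1) *
    (Rpower (tau + d) (- bt) * (Rpower eps p * Rpower (1 + eps * Rabs k) (- p))).
Proof.
  assert (Hprof : 0 < 400 * exp (2 * T + 1) *
    (Rpower (tau + d) (- bt) * (Rpower eps p * Rpower (1 + eps * Rabs k) (- p)))).
  { repeat apply Rmult_lt_0_compat; auto using exp_pos, Rpower_pos; lra. }
  destruct (Req_EM_T k 0) as [->|Hk].
  - assert (Hchi : chi_eps eps 0 = 1)
      by (apply chi_eps_one; [lra|]; pose proof (Rinv_0_lt_compat eps); lra).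
    unfold integrand, fker. rewrite Hchi.
    replace (- tau * ((2 + 0 * eps) ^ 2 * 0 ^ 2)) with (- 4 * tau * 0 ^ 2) by ring.
    rewrite Rmult_1_l, Rminus_diag, Rmult_0_r, Rabs_R0.
    replace (0 ^ 2) with 0 by ring. rewrite Rmult_0_l. rewrite Rabs_R0 in Hprof. lra.
  - destruct (Rle_or_lt 1 (eps * Rabs k)) as [Hhigh|Hlow].
    + eapply Rle_trans; [now apply integrand_le_high_freq|]. lra.
    + now apply integrand_le_low_freq.
Qed.

End PointwiseBound.

(** * Integration in frequency and time *)

Lemma inner_integral_le nu eps gam bt T tau d M :
  Rabs nu <= 1 -> 0 < eps < 1 -> 0 < gam -> bt <= 1 -> 1 < 2 * bt - 2 * gam ->
  0 <= tau <= T -> 0 < d -> 0 < M -> 2 * d * M ^ 2 <= 1 ->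
  RInt (integrand nu eps gam tau) (- M) M <=
  800 * exp (2 * T + 1) * Rpower eps (2 * bt - 2 * gam) / (eps * (2 * bt - 2 * gam - 1))
  * Rpower (tau + d) (- bt).
Proof.
  intros Hnu He Hg Hbt Hp Ht Hd HM HdM.
  set (p := 2 * bt - 2 * gam).
  set (c := 400 * exp (2 * T + 1) * (Rpower (tau + d) (- bt) * Rpower eps p)).
  destruct (RInt_Rpower_one_plus_abs eps p M ltac:(lra) Hp HM) as [Hex Hle].
  apply Rle_trans with (c * RInt (fun k => Rpower (1 + eps * Rabs k) (- p)) (- M) M).
  - apply RInt_le_scal; auto; [lra | apply integrand_ex_RInt; lra |].
    intros k Hk.
    eapply Rle_trans; [apply (integrand_le_profile nu eps gam bt T tau d k); auto; try lra|].
    + assert (k ^ 2 <= M ^ 2) by (apply sqr_le_of_abs_le, Rabs_le; lra). nra.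
    + right. unfold c. fold p. ring.
  - assert (0 < c)
      by (unfold c; repeat apply Rmult_lt_0_compat; auto using exp_pos, Rpower_pos; lra).
    apply Rle_trans with (c * (2 / (eps * (p - 1)))); [now apply Rmult_le_compat_l; [lra|]|].
    right. unfold c, p. field. split; lra.
Qed.

Lemma shift_for_window M :
  0 < / (2 * M ^ 2 + 1) <= 1 /\ 2 * / (2 * M ^ 2 + 1) * M ^ 2 <= 1.
Proof.
  pose proof (pow2_ge_0 M). split.
  - split; [apply Rinv_0_lt_compat; lra|].
    rewrite <- Rinv_1. apply Rinv_le_contravar; lra.
  - apply Rmult_le_reg_r with (2 * M ^ 2 + 1); [lra|].
    replace (2 * / (2 * M ^ 2 + 1) * M ^ 2 * (2 * M ^ 2 + 1)) with (2 * M ^ 2)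
      by (field; lra).
    lra.
Qed.

Lemma double_integral_le nu eps gam bt T M :
  Rabs nu <= 1 -> 0 < eps < 1 -> 0 < gam -> bt < 1 -> 5 / 4 <= 2 * bt - 2 * gam ->
  0 < T -> 0 < M ->
  ex_RInt (fun tau => RInt (integrand nu eps gam tau) (- M) M) 0 T /\
  RInt (fun tau => RInt (integrand nu eps gam tau) (- M) M) 0 T <=
  3200 * exp (2 * T + 1) * (T + 2) / (1 - bt) * Rpower eps (2 * bt - 2 * gam - 1).
Proof.
  intros Hnu He Hg Hbt Hp HT HM.
  set (d := / (2 * M ^ 2 + 1)).
  destruct (shift_for_window M) as [Hd HdM]. fold d in Hd, HdM.
  assert (Hex : ex_RInt (fun tau => RInt (integrand nu eps gam tau) (- M) M) 0 T).
  { apply (ex_RInt_continuous (V := R_CompleteNormedModule)).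
    intros t _. apply inner_integral_continuous; lra. }
  split; auto.
  destruct (RInt_Rpower_shift d bt T Hd ltac:(lra) HT) as [Hsex Hsle].
  set (p := 2 * bt - 2 * gam).
  set (c := 800 * exp (2 * T + 1) * Rpower eps p / (eps * (p - 1))).
  apply Rle_trans with (c * RInt (fun t => Rpower (t + d) (- bt)) 0 T).
  - apply RInt_le_scal; auto; [lra|].
    intros t Ht. apply inner_integral_le; auto; lra.
  - assert (Hpow : Rpower eps p = eps * Rpower eps (p - 1)).
    { replace p with (1 + (p - 1)) at 1 by ring. now rewrite Rpower_plus, Rpower_1 by lra. }
    assert (HE : 0 < Rpower eps (p - 1)) by apply Rpower_pos.
    assert (HeT : 0 < exp (2 * T + 1)) by apply exp_pos.
    assert (Hc : 0 <= c <= 3200 * exp (2 * T + 1) * Rpower eps (p - 1)).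
    { unfold c. rewrite Hpow.
      replace (800 * exp (2 * T + 1) * (eps * Rpower eps (p - 1)) / (eps * (p - 1)))
        with (exp (2 * T + 1) * Rpower eps (p - 1) * (800 * / (p - 1))) by (field; unfold p; lra).
      replace (3200 * exp (2 * T + 1) * Rpower eps (p - 1))
        with (exp (2 * T + 1) * Rpower eps (p - 1) * 3200) by ring.
      assert (0 < / (p - 1) <= 4).
      { split; [apply Rinv_0_lt_compat; unfold p; lra|].
        rewrite <- (Rinv_inv 4). apply Rinv_le_contravar; unfold p; lra. }
      assert (0 < exp (2 * T + 1) * Rpower eps (p - 1)) by now apply Rmult_lt_0_compat.
      split; [apply Rmult_le_pos | apply Rmult_le_compat_l]; lra. }
    assert (0 < (T + 2) / (1 - bt)) by (apply Rdiv_lt_0_compat; lra).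
    apply Rle_trans with (c * ((T + 2) / (1 - bt))); [now apply Rmult_le_compat_l|].
    apply Rle_trans with (3200 * exp (2 * T + 1) * Rpower eps (p - 1) * ((T + 2) / (1 - bt)));
      [apply Rmult_le_compat_r; lra|].
    right. unfold Rdiv. ring.
Qed.

Theorem mainTheorem13 (nu : R) (Hnu : Rabs nu <= 1)
  (T kappa : R) (HT : 0 < T) (Hkappa : 0 < kappa) :
  exists eps0 gam0 C : R, 0 < eps0 /\ 0 < gam0 /\ 0 < C /\
    forall gam eps : R, 0 < gam < gam0 -> 0 < eps < eps0 ->
    forall M : R, 0 < M ->
      (forall tau, 0 <= tau <= T ->
         inhabited (Riemann_integrable (integrand nu eps gam tau) (- M) M)) /\
      inhabited (Riemann_integrable
         (fun tau => RI (integrand nu eps gam tau) (- M) M) 0 T) /\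
      RI (fun tau => RI (integrand nu eps gam tau) (- M) M) 0 T
        <= C * Rpower eps (1 - kappa).
Proof.
  set (kp := Rmin kappa 1).
  assert (Hkp : 0 < kp /\ kp <= kappa /\ kp <= 1)
    by (unfold kp; repeat split; [apply Rmin_glb_lt; lra | apply Rmin_l | apply Rmin_r]).
  set (bt := 1 - kp / 4).
  set (C := 3200 * exp (2 * T + 1) * (T + 2) / (1 - bt)).
  assert (HC : 0 < C).
  { unfold C, bt. pose proof (exp_pos (2 * T + 1)). apply Rdiv_lt_0_compat; nra. }
  exists 1, (kp / 8), C. split; [lra|]. split; [lra|]. split; [exact HC|].
  intros gam eps Hg He M HM.
  assert (Hin : forall tau, ex_RInt (integrand nu eps gam tau) (- M) M)
    by (intros; apply integrand_ex_RInt; lra).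
  destruct (double_integral_le nu eps gam bt T M) as [Hex Hle]; auto; try (unfold bt; lra).
  replace (fun tau => RI (integrand nu eps gam tau) (- M) M)
    with (fun tau => RInt (integrand nu eps gam tau) (- M) M)
    by (apply functional_extensionality; intros; symmetry; apply RI_RInt, Hin).
  split; [intros tau _; constructor; now apply ex_RInt_Reals_0|].
  split; [constructor; now apply ex_RInt_Reals_0|].
  rewrite RI_RInt by auto. eapply Rle_trans; [apply Hle|].
  apply Rmult_le_compat_l; [lra|]. apply Rpower_le_base_lt1; unfold bt; lra.
Qed.
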